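(* Consider transport, under an invertible area-preserving map $P$ of a two-dimensional surface $\Sigma$, between two regions $R_0$ and $R_1$ separated by a homoclinic or heteroclinic tangle, with lobes $L_{i,j}(n)$ as described in the context, and assume $L_{0,1}(0)\cap L_{1,0}(0)=\emptyset$. Let $i\in\{0,1\}$, $j=1-i$, and let integers $k_1<k_3$ be such that $L_{i,j}(k_1)\cap L_{i,j}(k_3)\neq\emptyset$. Then $$L_{i,j}(k_1)\cap L_{i,j}(k_3)=\bigcup_{k_2=k_1+1}^{k_3-1} L_{i,j}(k_1)\cap L_{j,i}(k_2)\cap L_{i,j}(k_3).$$
   Context: $\Sigma$ is a two-dimensional surface with an area measure $\mu$ and $P:\Sigma\to\Sigma$ an invertible $\mu$-preserving map. $R_0$ and $R_1$ are two regions of $\Sigma$ whose common boundary is formed by segments of stable and unstable manifolds of hyperbolic fixed points of $P$ joined at primary intersection points (a homoclinic or heteroclinic tangle). For $i\in\{0,1\}$, $j=1-i$, $L_{i,j}(n)$ ($n\in\mathbb{Z}$) denotes the lobe of points that leave $R_i$ for $R_j$ immediately after $n$ iterations of $P$: $L_{i,j}(1)\subset R_i$, $L_{i,j}(0)=P\,L_{i,j}(1)\subset R_j$, and $P^kL_{i,j}(n)=L_{i,j}(n-k)$ for all $k,n\in\mathbb{Z}$. Transport between the regions occurs only through these lobes (turnstile): a point $x$ with $P^{m-1}x\in R_i$ and $P^{m}x\in R_j$ lies in $L_{i,j}(m)$. *)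

From HB Require Import structures.
From mathcomp Require Import all_boot all_order all_algebra.
From mathcomp Require Import all_classical all_reals all_analysis.
Set Implicit Arguments. Unset Strict Implicit. Unset Printing Implicit Defensive.
Import Order.TTheory GRing.Theory Num.Theory.

Definition iterz (T : Type) (P Q : T -> T) (k : int) (x : T) : T :=
  match k with
  | Posz n => iter n P x
  | Negz n => iter n.+1 Q x
  end.

From HB Require Import structures.
From mathcomp Require Import all_boot all_order all_algebra.
From mathcomp Require Import all_classical all_reals all_analysis.
From mathcomp Require Import zify.
Import Order.TTheory GRing.Theory Num.Theory.

Set Implicit Arguments.
Unset Strict Implicit.
Unset Printing Implicit Defensive.

Local Open Scope classical_set_scope.
Local Open Scope ring_scope.

(* A point of L_{i,j}(k1) ∩ L_{i,j}(k3) lies in R_j after k1 iterations and in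
   R_i after k3 - 1 iterations, so at some time k2 with k1 < k2 < k3 its orbit
   steps from R_j into R_i, and the turnstile property puts it in L_{j,i}(k2). *)

Lemma int_crossing (p : pred int) (a b : int) :
  a <= b -> ~~ p a -> p b -> exists2 m, a < m <= b & ~~ p (m - 1) && p m.
Proof.
move=> le_ab npa; have [n ->] : exists n : nat, b = a + n%:Z.
  by exists `|b - a|%N; lia.
elim: n => [|n IHn] pn.
  by move: pn; rewrite (_ : a + 0%:Z = a) ?(negbTE npa) //; lia.
case pan: (p (a + n%:Z)).
  have [m /andP[lt_am le_mn] hm] := IHn pan.
  by exists m => //; rewrite lt_am (le_trans le_mn) //; lia.
exists (a + n.+1%:Z); first by apply/andP; split; lia.
by rewrite (_ : a + n.+1%:Z - 1 = a + n%:Z) ?pan ?pn //; lia.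
Qed.

Section Lobes.

Variables (T : Type) (P Q : T -> T).
Variables (Reg : bool -> set T) (L : bool -> int -> set T).
Hypothesis Reg_disj : Reg false `&` Reg true = set0.
Hypothesis Reg_cover : Reg false `|` Reg true = setT.
Hypothesis L1_sub : forall i, L i 1 `<=` Reg i.
Hypothesis L0_sub : forall i, L i 0 `<=` Reg (~~ i).
Hypothesis L_shift : forall i (k n : int), iterz P Q k @` L i n = L i (n - k).
Hypothesis turnstile : forall i (m : int) (x : T),
  Reg i (iterz P Q (m - 1) x) -> Reg (~~ i) (iterz P Q m x) -> L i m x.

Lemma RegN (b : bool) (y : T) : Reg (~~ b) y <-> ~ Reg b y.
Proof.
have cover : (Reg false `|` Reg true) y by rewrite Reg_cover.
split=> [hN hb | nb].
  have : (Reg false `&` Reg true) y by case: b hb hN.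
  by rewrite Reg_disj.
by case: b nb cover => /= nb [].
Qed.

Lemma L_iterz (b : bool) (n k : int) (x : T) :
  L b n x -> L b (n - k) (iterz P Q k x).
Proof. by move=> Lx; rewrite -L_shift; exists x. Qed.

Lemma L_enter (b : bool) (n : int) (x : T) :
  L b n x -> Reg (~~ b) (iterz P Q n x).
Proof. by move=> /(L_iterz n); rewrite subrr; apply: L0_sub. Qed.

Lemma L_leave (b : bool) (n : int) (x : T) :
  L b n x -> Reg b (iterz P Q (n - 1) x).
Proof. by move=> /(L_iterz (n - 1)); rewrite opprB addrC subrK; apply: L1_sub. Qed.

Lemma L_return (i : bool) (k1 k3 : int) (x : T) :
  k1 < k3 -> L i k1 x -> L i k3 x -> exists2 k2, k1 < k2 < k3 & L (~~ i) k2 x.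
Proof.
move=> lt_k13 L1x L3x.
pose inRi m := `[< Reg i (iterz P Q m x) >].
have notRi_k1 : ~~ inRi k1 by apply/asboolPn/RegN/L_enter.
have Ri_k3 : inRi (k3 - 1) by apply/asboolP/L_leave.
have [|k2 /andP[lt_k12 le_k23] /andP[/asboolPn /RegN Rj_prev Ri_k2]] :=
  int_crossing _ notRi_k1 Ri_k3; first by lia.
exists k2; first by apply/andP; split; lia.
by apply: turnstile; rewrite ?negbK //; apply/asboolP.
Qed.

End Lobes.

(* Regions are indexed by bool (false = R_0, true = R_1);
   L i n stands for the lobe L_{i, 1-i}(n). *)
Theorem lemma3 (d : measure_display) (Sigma : measurableType d) (R : realType)
  (mu : {measure set Sigma -> \bar R})
  (P Q : Sigma -> Sigma)
  (PQ : cancel P Q) (QP : cancel Q P)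
  (mP : measurable_fun setT P)
  (mu_pres : forall A, measurable A -> mu (P @^-1` A) = mu A)
  (Reg : bool -> set Sigma) (L : bool -> int -> set Sigma)
  (Reg_disj : Reg false `&` Reg true = set0)
  (Reg_cover : Reg false `|` Reg true = setT)
  (L1_sub : forall i, L i 1 `<=` Reg i)
  (L0_img : forall i, L i 0 = P @` L i 1)
  (L0_sub : forall i, L i 0 `<=` Reg (~~ i))
  (L_shift : forall i (k n : int), iterz P Q k @` L i n = L i (n - k))
  (turnstile : forall i (m : int) (x : Sigma),
      Reg i (iterz P Q (m - 1) x) -> Reg (~~ i) (iterz P Q m x) -> L i m x)
  (hdisj : L false 0 `&` L true 0 = set0)
  (i : bool) (k1 k3 : int) (hk : k1 < k3)
  (hne : L i k1 `&` L i k3 !=set0) :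
  L i k1 `&` L i k3 =
    \bigcup_(k2 in [set k : int | k1 < k < k3])
      (L i k1 `&` L (~~ i) k2 `&` L i k3).
Proof.
apply/seteqP; split=> [x [L1x L3x] | x [k2 _ [[L1x _] L3x]]] //.
have [k2 k2_mid L2x] := L_return Reg_disj Reg_cover L1_sub L0_sub L_shift
  turnstile hk L1x L3x.
by exists k2.
Qed.
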